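(* If $n$ is a non-negative integer, then $$\sum_{k = 1}^n \sum_{j = \lfloor n/2 \rfloor }^{k - 1} \frac{1}{n - j}\binom{j}{n - j} = F_{n + 1} - 1.$$
   Context: $F_n$ are the Fibonacci numbers ($F_0=0$, $F_1=1$, $F_{n}=F_{n-1}+F_{n-2}$). A sum whose upper limit is smaller than its lower limit is zero. *)

From mathcomp Require Import all_boot all_algebra.
Set Implicit Arguments. Unset Strict Implicit. Unset Printing Implicit Defensive.

Fixpoint fib (n : nat) : nat :=
  match n with
  | 0 => 0
  | 1 => 1
  | (m.+1 as p).+1 => fib p + fib m
  end.

(* Summing the inner sums over k turns the left-hand side into
   sum_(n/2 <= j < n) C(j, n - j), each term weighted by (n - j)/(n - j) = 1.
   Adding the term j = n and the vanishing terms j < n/2 gives the shallow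
   diagonal sum sum_(j <= n) C(j, n - j) of Pascal's triangle, which is F_(n+1)
   by Pascal's rule. *)
From mathcomp Require Import all_boot all_algebra zify.
Import GRing.Theory Num.Theory.
Local Open Scope ring_scope.

Lemma sumr_partial_sums (V : nmodType) (f : nat -> V) (a m : nat) :
  \sum_(1 <= k < m.+1) \sum_(a <= j < k) f j = \sum_(a <= j < m) f j *+ (m - j).
Proof.
elim: m => [|m IH]; first by rewrite !big_geq.
rewrite big_nat_recr //= IH.
have [le_am|lt_ma] := leqP a m; last by rewrite !big_geq ?addr0 // ltnW.
rewrite !(big_nat_recr m) //= subSn // subnn addrA -big_split /=.
congr (_ + _); apply: eq_big_nat => j /andP[_ lt_jm].
by rewrite subSn 1?ltnW // mulrS addrC.
Qed.

(* Pascal's rule, also valid when the truncated subtraction [n.+1 - i] is 0. *)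
Lemma binS_subn (n i : nat) :
  'C(n.+1 - i, i.+1) = ('C(n - i, i.+1) + 'C(n - i, i))%N.
Proof.
have [le_in|lt_ni] := leqP i n; first by rewrite subSn // binS.
have [-> ->] : (n.+1 - i = 0 /\ n - i = 0)%N by lia.
by rewrite !bin0n; case: i lt_ni.
Qed.

(* The bound [N] is arbitrary beyond [n], since the terms with [i > n] vanish;
   this lets both recursive calls use the same range. *)
Lemma fib_diagonal_sum (n N : nat) :
  (n < N)%N -> (\sum_(i < N) 'C(n - i, i))%N = fib n.+1.
Proof.
suff: forall N, (n < N -> \sum_(i < N) 'C(n - i, i) = fib n.+1)%N /\
                (n.+1 < N -> \sum_(i < N) 'C(n.+1 - i, i) = fib n.+2)%N.
  by move=> /(_ N)[].
elim: n {N} => [|n IH] [|N] //.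
  by split=> _; rewrite big_ord_recl big1 // => i _; rewrite bin0n.
split=> [|lt_nN]; first exact: (IH N.+1).2.
rewrite big_ord_recl bin0.
under eq_bigr => i _ do rewrite /bump /= subSS binS_subn.
rewrite big_split /= (IH N).1; last by lia.
have shift : (\sum_(i < N.+1) 'C(n.+1 - i, i)
              = 1 + \sum_(i < N) 'C(n - i, i.+1))%N.
  by rewrite big_ord_recl bin0; congr (_ + _)%N; apply: eq_bigr => i _.
by rewrite addnA -shift (IH N.+1).2 //; lia.
Qed.

Lemma fib_upper_diagonal_sum (n : nat) :
  (\sum_(n./2 <= j < n) 'C(j, n - j) + 1)%N = fib n.+1.
Proof.
have half_le : (n./2 <= n)%N by have := odd_double_half n; lia.
have lower_half_vanish : (\sum_(0 <= j < n./2) 'C(j, n - j) = 0)%N.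
  rewrite big1_seq // => j; rewrite mem_index_iota => /andP[_ lt_j_half].
  by apply: bin_small; have := odd_double_half n; lia.
rewrite -(@fib_diagonal_sum n n.+1) // -(big_mkord xpredT (fun i => 'C(n - i, i))).
rewrite [RHS]big_rev_mkord subn0 -(big_mkord xpredT (fun j => 'C(n - (n - j), n - j))).
rewrite [RHS](eq_big_nat _ _ (F2 := fun j => 'C(j, n - j))) => [|j /andP[_ lt_jn]].
  rewrite [RHS](big_cat_nat _ (n := n./2)) ?leqW //= lower_half_vanish.
  by rewrite big_nat_recr //= subnn bin0.
by rewrite subKn // -ltnS.
Qed.

Theorem proposition13 (n : nat) :
  \sum_(1 <= k < n.+1) \sum_(n./2 <= j < k)
      (('C(j, n - j))%:R / (n - j)%:R : rat)
  = (fib n.+1)%:R - 1.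
Proof.
rewrite sumr_partial_sums -(fib_upper_diagonal_sum n) natrD addrK natr_sum.
apply: eq_big_nat => j /andP[_ lt_jn].
by rewrite -[LHS]mulr_natr divfK // pnatr_eq0 subn_eq0 -ltnNge.
Qed.
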